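(* Let $A$ be a finite set of options containing a distinguished default option $0$, and let $\mathcal{L}$ be the set of all Llull matrices on $A$, viewed as a subset of a finite-dimensional real space. For $v\in\mathcal{L}$ let $W(v)$ denote the set of path-revised approval choices of $v$. Then $W$ is upper semicontinuous on $\mathcal{L}$: every $v\in\mathcal{L}$ has a neighbourhood $U$ such that $W(w)\subseteq W(v)$ for every $w\in U\cap\mathcal{L}$.
   Context: A Llull matrix on $A$ is a family of real numbers $v_{xy}\in[0,1]$, indexed by ordered pairs $(x,y)$ of distinct elements of $A$, with $v_{xy}+v_{yx}\le1$. Path scores: $v^*_{xy}=\max\min(v_{x_0x_1},\dots,v_{x_{m-1}x_m})$ over all paths $x_0\dots x_m$ ($m\ge1$, $x_0=x$, $x_m=y$, $x_i$ pairwise distinct). For $z\in A$ put $D_v(z)=v^*_{z0}-v^*_{0z}$ if $z\ne0$ and $D_v(0)=0$. An option $x\in A$ is a path-revised approval choice of $v$ if $D_v(x)\ge D_v(y)$ for all $y\in A\setminus\{x\}$; $W(v)$ is the set of these options. *)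

From HB Require Import structures.
From mathcomp Require Import all_boot all_order all_algebra.
From mathcomp Require Import reals.
Set Implicit Arguments. Unset Strict Implicit. Unset Printing Implicit Defensive.
Import Order.TTheory GRing.Theory Num.Theory.
Local Open Scope ring_scope.

(* A matrix on A is represented as a function v : A -> A -> R; only the
   entries v x y with x != y are meaningful (diagonal entries are ignored
   by every definition below). *)

Definition llull (R : realType) (A : finType) (v : A -> A -> R) : Prop :=
  forall x y : A, x != y ->
    [/\ 0 <= v x y, v x y <= 1 & v x y + v y x <= 1].

Fixpoint path_min (R : realType) (A : finType) (v : A -> A -> R)
    (x : A) (t : seq A) (y : A) : R :=
  match t with
  | [::] => v x y
  | z :: t' => Num.min (v x z) (path_min v z t' y)
  end.

(* Path score v*_{xy}: maximum of path_min over all paths x = x_0 ... x_m = y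
   (m >= 1) with pairwise distinct vertices.  Such a path has m-1 < #|A|
   intermediate vertices, enumerated as n-tuples with n < #|A|.  The seed of
   the max is v x y, the score of the (always admissible for x != y) direct
   path, so it does not alter the value. *)
Definition path_score (R : realType) (A : finType) (v : A -> A -> R)
    (x y : A) : R :=
  \big[Num.max/v x y]_(n < #|A|)
    \big[Num.max/v x y]_(t : n.-tuple A | uniq (x :: rcons (tval t) y))
      path_min v x (tval t) y.

Definition Dv (R : realType) (A : finType) (o : A) (v : A -> A -> R)
    (z : A) : R :=
  if z == o then 0 else path_score v z o - path_score v o z.

Definition Wchoice (R : realType) (A : finType) (o : A) (v : A -> A -> R)
    : {set A} :=
  [set x | [forall y, (y != x) ==> (Dv o v y <= Dv o v x)]].

From HB Require Import structures.
From mathcomp Require Import all_boot all_order all_algebra.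
From mathcomp Require Import reals lra.
Set Implicit Arguments. Unset Strict Implicit. Unset Printing Implicit Defensive.
Import Order.TTheory GRing.Theory Num.Theory.
Local Open Scope ring_scope.

(* Every path score, hence every D_v(z), moves by less than eps when the
   entries of v move by less than eps (min and max are 1-Lipschitz), so
   D_w stays within 2 eps of D_v.  If 4 eps is below the smallest strict gap
   D_v(y) - D_v(x) > 0, no strict preference of D_v can be reversed by D_w,
   hence a maximiser of D_w maximises D_v. *)

Lemma dist_max_lt (R : realDomainType) (a b c d e : R) :
  `|a - b| < e -> `|c - d| < e -> `|Num.max a c - Num.max b d| < e.
Proof.
rewrite !ltr_norml => /andP[? ?] /andP[? ?].
by rewrite /Num.max; case: ifP => ?; case: ifP => ?; apply/andP; split; lra.
Qed.

Lemma dist_min_lt (R : realDomainType) (a b c d e : R) :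
  `|a - b| < e -> `|c - d| < e -> `|Num.min a c - Num.min b d| < e.
Proof.
rewrite !ltr_norml => /andP[? ?] /andP[? ?].
by rewrite /Num.min; case: ifP => ?; case: ifP => ?; apply/andP; split; lra.
Qed.

Section PathScoreContinuity.

Variables (R : realType) (A : finType) (v w : A -> A -> R) (e : R).
Hypothesis close_vw : forall x y : A, x != y -> `|w x y - v x y| < e.

Lemma path_min_dist_lt (t : seq A) (x y : A) :
  uniq (x :: rcons t y) -> `|path_min w x t y - path_min v x t y| < e.
Proof.
elim: t x => [|z t IH] x /= /andP[]; rewrite inE.
  by move=> xy _; exact: close_vw.
by rewrite negb_or => /andP[xz _] ut; apply: dist_min_lt; [exact: close_vw | exact: IH].
Qed.

Lemma path_score_dist_lt (x y : A) :
  x != y -> `|path_score w x y - path_score v x y| < e.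
Proof.
move=> xy.
apply: (big_ind2 (fun a b => `|a - b| < e)) => [|? ? ? ?|n _]; first exact: close_vw.
  exact: dist_max_lt.
apply: (big_ind2 (fun a b => `|a - b| < e)) => [|? ? ? ?|t]; first exact: close_vw.
  exact: dist_max_lt.
exact: path_min_dist_lt.
Qed.

Lemma Dv_dist_lt (o z : A) : 0 < e -> `|Dv o w z - Dv o v z| < 2 * e.
Proof.
move=> e_gt0; rewrite /Dv; case: eqP => [_|/eqP zo].
  by rewrite subrr normr0; lra.
have oz : o != z by rewrite eq_sym.
move: (path_score_dist_lt zo) (path_score_dist_lt oz).
by rewrite !ltr_norml => /andP[? ?] /andP[? ?]; apply/andP; split; lra.
Qed.

End PathScoreContinuity.

Section StrictGap.

Variables (R : realFieldType) (A : finType) (f : A -> R).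

(* The seed 1 only matters when f is constant, where there is no strict gap. *)
Definition strict_gap : R :=
  \big[Num.min/1]_(p : A * A | f p.1 < f p.2) (f p.2 - f p.1).

Lemma strict_gap_gt0 : 0 < strict_gap.
Proof.
apply: (big_ind (fun x : R => 0 < x)) => //.
  by move=> a b a0 b0; rewrite /Num.min; case: ifP.
by move=> p; rewrite subr_gt0.
Qed.

Lemma strict_gap_le (x y : A) : f x < f y -> strict_gap <= f y - f x.
Proof.
move=> lt_xy; rewrite /strict_gap (bigD1 (x, y)) //=.
by rewrite /Num.min; case: ifP => // /negbT; rewrite -leNgt.
Qed.

Lemma preference_stable (g : A -> R) (x y : A) :
  (forall z, `|g z - f z| < strict_gap / 2) -> g y <= g x -> f y <= f x.
Proof.
move=> close_gf le_g; rewrite leNgt; apply/negP => lt_f.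
have := strict_gap_le lt_f; move: (close_gf x) (close_gf y).
by rewrite !ltr_norml => /andP[? ?] /andP[? ?] ?; lra.
Qed.

End StrictGap.

Theorem theorem3p3 (R : realType) (A : finType) (o : A) (v : A -> A -> R) :
  llull v ->
  exists2 eps : R, 0 < eps &
    forall w : A -> A -> R, llull w ->
      (forall x y : A, x != y -> `|w x y - v x y| < eps) ->
      Wchoice o w \subset Wchoice o v.
Proof.
move=> _; have gap_gt0 := strict_gap_gt0 (Dv o v).
exists (strict_gap (Dv o v) / 4); first by lra.
move=> w _ close_wv; apply/subsetP => x; rewrite !inE => /forallP max_w.
apply/forallP => y; apply/implyP => yx.
apply: (@preference_stable _ _ _ (Dv o w)); last exact: (implyP (max_w y)).
move=> z; have eps_gt0 : 0 < strict_gap (Dv o v) / 4 by lra.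
by have := Dv_dist_lt close_wv o z eps_gt0; lra.
Qed.
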